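(* Let $R \subseteq S \subseteq T$ be commutative ring extensions, and let $X = \{P \in \operatorname{Spec} S : P \cap R \text{ is a maximal ideal of } R\}$. Suppose that the contraction map $\operatorname{Spec} S \setminus X \to \operatorname{Spec} R \setminus \operatorname{Max} R$ is injective and that $R \subseteq S$ satisfies INC. If $R \subseteq T$ satisfies going-down, then so does $S \subseteq T$.
   Context: A ring extension $A \subseteq B$ satisfies going-down if whenever $\mathfrak{p} \subset \mathfrak{q}$ are primes of $A$ and $Q$ is a prime of $B$ with $Q \cap A = \mathfrak{q}$, there is a prime $P \subseteq Q$ of $B$ with $P \cap A = \mathfrak{p}$. It satisfies INC (incomparability) if distinct comparable primes $P \subsetneq P'$ of $B$ never have the same contraction to $A$. $\operatorname{Max} R$ denotes the set of maximal ideals of $R$. *)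

From mathcomp Require Import all_boot all_algebra.
Set Implicit Arguments. Unset Strict Implicit. Unset Printing Implicit Defensive.
Import GRing.Theory.
Local Open Scope ring_scope.

Definition is_ideal (A : comNzRingType) (I : A -> Prop) : Prop :=
  I 0 /\ (forall x y, I x -> I y -> I (x + y)) /\ (forall a x, I x -> I (a * x)).

Definition is_prime (A : comNzRingType) (I : A -> Prop) : Prop :=
  is_ideal I /\ ~ I 1 /\ (forall x y, I (x * y) -> I x \/ I y).

Definition is_maximal (A : comNzRingType) (I : A -> Prop) : Prop :=
  is_ideal I /\ ~ I 1 /\
  (forall J : A -> Prop, is_ideal J -> ~ J 1 -> (forall x, I x -> J x) ->
     forall x, J x -> I x).

Definition contr (A B : comNzRingType) (f : A -> B) (Q : B -> Prop) : A -> Prop :=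
  fun x => Q (f x).

Definition pincl (A : Type) (P Q : A -> Prop) : Prop := forall x, P x -> Q x.
Definition peq (A : Type) (P Q : A -> Prop) : Prop := forall x, P x <-> Q x.

Definition going_down (A B : comNzRingType) (f : A -> B) : Prop :=
  forall (p q : A -> Prop) (Q : B -> Prop),
    is_prime p -> is_prime q -> pincl p q ->
    is_prime Q -> peq (contr f Q) q ->
    exists P : B -> Prop, is_prime P /\ pincl P Q /\ peq (contr f P) p.

Definition INC (A B : comNzRingType) (f : A -> B) : Prop :=
  forall P P' : B -> Prop, is_prime P -> is_prime P' -> pincl P P' ->
    peq (contr f P) (contr f P') -> peq P P'.

From mathcomp Require Import all_boot all_algebra.
From Stdlib Require Import Classical.
Set Implicit Arguments.
Import GRing.Theory.
Local Open Scope ring_scope.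

(* Given primes p ⊆ q of S and Q over q in T, going-down for R ⊆ T yields a
   prime P ⊆ Q of T with P ∩ R = p ∩ R. If p ∩ R is maximal, then p ∩ R = q ∩ R,
   so p = q by INC and Q itself lies over p. Otherwise P ∩ S and p both contract
   to the same non-maximal prime of R, so P ∩ S = p by the injectivity hypothesis. *)

Lemma peq_sym (A : Type) (I J : A -> Prop) : peq I J -> peq J I.
Proof. by move=> E x; symmetry; apply: E. Qed.

Lemma contr_prime (A B : comNzRingType) (f : {rmorphism A -> B}) (Q : B -> Prop) :
  is_prime Q -> is_prime (contr f Q).
Proof.
move=> [[Q0 [QD QM]] [Q1 Qp]]; rewrite /contr; split; [split; [|split]|split].
- by rewrite rmorph0.
- by move=> x y Qx Qy; rewrite rmorphD; apply: QD.
- by move=> a x Qx; rewrite rmorphM; apply: QM.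
- by rewrite rmorph1.
- by move=> x y; rewrite rmorphM; apply: Qp.
Qed.

Lemma maximal_peq (A : comNzRingType) (I J : A -> Prop) :
  is_maximal I -> peq I J -> is_maximal J.
Proof.
move=> [[I0 [ID IM]] [I1 Imax]] E; split; [split; [|split]|split].
- exact/E.
- by move=> x y /E Ix /E Iy; apply/E; apply: ID.
- by move=> a x /E Ix; apply/E; apply: IM.
- by move/E.
- move=> K Kid K1 JK x Kx; apply/E; apply: (Imax K Kid K1) => // y /E; exact: JK.
Qed.

Lemma maximal_pincl_prime_peq (A : comNzRingType) (I J : A -> Prop) :
  is_maximal I -> is_prime J -> pincl I J -> peq I J.
Proof.
move=> [_ [_ Imax]] [Jid [J1 _]] IJ x; split; first exact: IJ.
exact: Imax.
Qed.

Theorem lemma5p1 (R S T : comNzRingType)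
  (f : {rmorphism R -> S}) (g : {rmorphism S -> T})
  (f_inj : injective f) (g_inj : injective g)
  (Hinj : forall P1 P2 : S -> Prop, is_prime P1 -> is_prime P2 ->
     ~ is_maximal (contr f P1) -> ~ is_maximal (contr f P2) ->
     peq (contr f P1) (contr f P2) -> peq P1 P2)
  (Hinc : INC f) :
  going_down (g \o f) -> going_down g.
Proof.
move=> GD p q Q p_prime q_prime pq Q_prime Qq.
have fpq : pincl (contr f p) (contr f q) by move=> x; apply: pq.
have [P [P_prime [PQ Pp]]] := GD _ _ Q (contr_prime f p_prime)
  (contr_prime f q_prime) fpq Q_prime (fun x => Qq (f x)).
have gP_prime := contr_prime g P_prime.
case: (classic (is_maximal (contr f p))) => [fp_max | fp_nmax].
- have p_eq_q := Hinc p q p_prime q_prime pq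
    (maximal_pincl_prime_peq fp_max (contr_prime f q_prime) fpq).
  exists Q; split=> //; split=> // x.
  by rewrite (Qq x); apply: peq_sym.
- have fgP_nmax : ~ is_maximal (contr f (contr g P)).
    by move=> fgP_max; apply/fp_nmax/(maximal_peq fgP_max).
  by exists P; split=> //; split=> //; apply: Hinj.
Qed.
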